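(* Let $(K_n;n\ge1)$ be non-negative integral kernels on $\mathsf{X}$, $(\nu_n;n\ge1)$ nonzero finite measures, and $(S_n^-,S_n^+;n\ge1)$ positive bounded measurable functions such that \[ S_n^-(x)\nu_n(\cdot)\le K_n(x,\cdot)\le S_n^+(x)\nu_n(\cdot),\qquad\forall x\in\mathsf{X},\ n\ge1. \] Let $\overline{S}_n:=\sup_{x,x'}\frac{S_n^+(x)}{S_n^-(x')}$, $C_S:=\sup_{n\ge1}\overline{S}_n$ and $\rho_n:=1-\left(\inf_x\frac{S_n^-(x)}{S_n^+(x)}\right)^2$. Then \[ \sup_{n\ge1}\sup_{x,x'\in\mathsf{X}}\frac{K_{0,n}(1)(x)}{K_{0,n}(1)(x')}\le C_S, \] and for every probability measure $\eta$, every bounded measurable $\varphi$ and every $n\ge1$, \[ \sup_{x\in\mathsf{X}}\left|\frac{K_{0,n}(\varphi)(x)}{\eta K_{0,n}(1)}-\frac{K_{0,n}(1)(x)}{\eta K_{0,n}(1)}\frac{\eta K_{0,n}(\varphi)}{\eta K_{0,n}(1)}\right|\le 2\|\varphi\|\,C_S\prod_{p=1}^n\rho_p. \]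
   Context: $(\mathsf{X},\mathcal{B})$ is a measurable space. For a measure $\mu$, kernel $K$ and function $\varphi$: $\mu(\varphi)=\int\varphi\,d\mu$, $K(\varphi)(x)=\int K(x,dy)\varphi(y)$, $\mu K(\cdot)=\int\mu(dx)K(x,\cdot)$; $1$ is the constant function one; $\|\varphi\|=\sup_x|\varphi(x)|$. For kernels $K_n$, $K_{0,n}:=K_1K_2\cdots K_n$ (composition). *)

From HB Require Import structures.
From mathcomp Require Import all_boot all_order all_algebra.
From mathcomp Require Import all_classical all_reals all_analysis.
Set Implicit Arguments. Unset Strict Implicit. Unset Printing Implicit Defensive.
Import Order.TTheory GRing.Theory Num.Theory.
Local Open Scope ring_scope.
Local Open Scope classical_set_scope.

Section Defs.
Context {d : measure_display} {X : measurableType d} {R : realType}.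

Definition Kop (k : R.-ker X ~> X) (f : X -> R) : X -> R :=
  fun x => fine (\int[k x]_y (f y)%:E)%E.

(* K_{0,n}(phi) = K_1 (K_2 ( ... (K_n phi))) *)
Definition Kcomp (K : nat -> R.-ker X ~> X) (n : nat) (f : X -> R) : X -> R :=
  foldr (fun p g => Kop (K p) g) f (iota 1 n).

Definition mapp (mu : {measure set X -> \bar R}) (f : X -> R) : R :=
  fine (\int[mu]_x (f x)%:E)%E.

Definition supnorm (f : X -> R) : \bar R := ereal_sup (range (fun x => (`|f x|)%:E)).

Definition Sbar (Sp Sm : X -> R) : \bar R :=
  ereal_sup [set (Sp x / Sm x')%:E | x in setT & x' in setT].

Definition rho (Sp Sm : X -> R) : R :=
  1 - (inf [set Sm x / Sp x | x in setT]) ^+ 2.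

End Defs.

From HB Require Import structures.
From mathcomp Require Import all_boot all_order all_algebra.
From mathcomp Require Import all_classical all_reals all_analysis.
From mathcomp Require Import measurable_realfun ring lra.
Set Implicit Arguments. Unset Strict Implicit. Unset Printing Implicit Defensive.
Import Order.TTheory GRing.Theory Num.Theory.
Local Open Scope ring_scope.
Local Open Scope classical_set_scope.

(* Each K_p maps a nonnegative bounded f to a function lying between
   Sm_p(x) nu_p(f) and Sp_p(x) nu_p(f); with p = 1 and f = K_2 ... K_n 1 this bounds
   K_{0,n}(1)(x) / K_{0,n}(1)(x') by Sp_1(x) / Sm_1(x') <= C_S.  For the second
   bound, follow an envelope
   m Q(1) <= Q(phi) <= (m + D) Q(1) of Q = K_p ... K_n, starting from D = 2 ||phi||
   for the empty product.  Applying K_p to the two nonnegative gaps and using the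
   minorization K_p(x, .) >= Sm_p(x) nu_p shrinks D by the factor 1 - eps_p, where
   eps_p = inf Sm_p / Sp_p.  Normalizing by eta K_{0,n}(1) costs the factor
   K_{0,n}(1)(x) / eta K_{0,n}(1) <= C_S, and 1 - eps_p <= 1 - eps_p^2 = rho_p. *)

Section bounded_measurable.
Context {d : measure_display} {X : measurableType d} {R : realType}.
Implicit Types (f g : X -> R) (c : R).

Definition bounded_measurable f :=
  measurable_fun setT f /\ exists M : R, forall x, `|f x| <= M.

Lemma bounded_measurable_cst c : bounded_measurable (fun=> c).
Proof. by split; [exact: measurable_cst | exists `|c|]. Qed.

Lemma bounded_measurableB f g : bounded_measurable f -> bounded_measurable g ->
  bounded_measurable (fun x => f x - g x).
Proof.
move=> [mf [M hM]] [mg [N hN]]; split; first exact: measurable_funB.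
by exists (M + N) => x; rewrite (le_trans (ler_normB _ _)) ?lerD.
Qed.

Lemma bounded_measurableZ c f : bounded_measurable f ->
  bounded_measurable (fun x => c * f x).
Proof.
move=> [mf [M hM]]; split; first by apply: measurable_funM => //; exact: measurable_cst.
by exists (`|c| * M) => x; rewrite normrM ler_wpM2l.
Qed.

End bounded_measurable.

Section finite_measure_integral.
Context {d : measure_display} {X : measurableType d} {R : realType}.
Variable mu : {measure set X -> \bar R}.
Hypothesis mu_fin : (mu setT < +oo)%E.
Implicit Types (f g : X -> R) (c : R).

Lemma bounded_measurable_integrable f : bounded_measurable f ->
  mu.-integrable setT (EFin \o f).
Proof.
move=> [mf [M hM]]; apply/integrableP; split; first exact/measurable_EFinP.
apply: (@le_lt_trans _ _ ((`|M|)%:E * mu setT)%E); last by rewrite lte_mul_pinfty.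
apply: integral_le_bound => //; first exact/measurable_EFinP.
by apply: aeW => x _ /=; rewrite lee_fin (le_trans (hM x)) ?ler_norm.
Qed.

Local Notation integrable := bounded_measurable_integrable.

Lemma mappB f g : bounded_measurable f -> bounded_measurable g ->
  mapp mu (fun x => f x - g x) = mapp mu f - mapp mu g.
Proof. by move=> bf bg; exact: RintegralB (integrable bf) (integrable bg). Qed.

Lemma mappZ c f : bounded_measurable f -> mapp mu (fun x => c * f x) = c * mapp mu f.
Proof. by move=> bf; exact: RintegralZl (integrable bf). Qed.

Lemma mapp_cst c : mapp mu (fun=> c) = c * fine (mu setT).
Proof. exact: Rintegral_cst. Qed.

Lemma le_mapp f g : bounded_measurable f -> bounded_measurable g ->
  (forall x, f x <= g x) -> mapp mu f <= mapp mu g.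
Proof. by move=> bf bg fg; apply: le_Rintegral; rewrite ?integrable. Qed.

Lemma norm_mapp_le f M : bounded_measurable f -> (forall x, `|f x| <= M) ->
  `|mapp mu f| <= M * fine (mu setT).
Proof.
move=> bf hM; rewrite -mapp_cst.
apply: (le_trans (le_normr_Rintegral _ _)) => //; first exact: integrable.
apply: (@le_Rintegral _ _ _ mu setT _ (fun=> M)) => //; first exact/integrable_norm/integrable.
exact/integrable/bounded_measurable_cst.
Qed.

Lemma mapp_gt0 f : mu setT != 0%E -> bounded_measurable f -> (forall x, 0 < f x) ->
  0 < mapp mu f.
Proof.
move=> mu0 bf f0; have mf : measurable_fun setT (EFin \o f) by apply/measurable_EFinP; case: bf.
apply: fine_gt0; apply/andP; split; last first.
  rewrite -ge0_fin_numE; last by apply: integral_ge0 => x _; rewrite lee_fin ltW.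
  exact: integrable_fin_num (integrable bf).
rewrite lt0e integral_ge0 ?andbT; last by move=> x _; rewrite lee_fin ltW.
apply/negP => /eqP int0.
have : (\int[mu]_(x in setT) `|(EFin \o f) x| = 0)%E.
  by rewrite -int0; apply: eq_integral => x _ /=; rewrite ger0_norm // ltW.
move/(ae_eq_integral_abs mu measurableT mf) => [N [mN N0 fN]].
move/eqP: mu0; apply; apply/eqP; rewrite -measure_le0 -N0.
apply: le_measure; rewrite ?inE // => x _; apply: fN => /(_ I) /= [].
exact/eqP/lt0r_neq0.
Qed.

End finite_measure_integral.

Lemma le_mapp_mscale {d : measure_display} {X : measurableType d} {R : realType}
    (mu1 mu2 : {measure set X -> \bar R}) (c1 c2 : R) (f : X -> R) :
  (mu1 setT < +oo)%E -> (mu2 setT < +oo)%E -> 0 <= c1 -> 0 <= c2 ->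
  (forall A, measurable A -> c1%:E * mu1 A <= c2%:E * mu2 A)%E ->
  bounded_measurable f -> (forall x, 0 <= f x) ->
  c1 * mapp mu1 f <= c2 * mapp mu2 f.
Proof.
move=> mu1_fin mu2_fin c10 c20 mu12 bf f0; have [mf _] := bf.
have mEf : measurable_fun setT (EFin \o f) by exact/measurable_EFinP.
rewrite -lee_fin !EFinM !fineK; last 2 first.
- exact: integrable_fin_num (bounded_measurable_integrable mu2_fin bf).
- exact: integrable_fin_num (bounded_measurable_integrable mu1_fin bf).
rewrite -[c1]/(NngNum c10)%:num -[c2]/(NngNum c20)%:num.
rewrite -!ge0_integral_mscale //; try by move=> x _; rewrite lee_fin.
by apply: ge0_le_measure_integral => // x _; rewrite lee_fin.
Qed.

Section supnorm.
Context {d : measure_display} {X : measurableType d} {R : realType}.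
Implicit Types (phi : X -> R).

Lemma normr_le_supnorm phi x : ((`|phi x|)%:E <= supnorm phi)%E.
Proof. by apply: ereal_sup_ubound; exists x. Qed.

Lemma supnorm_fin_num phi (x0 : X) : (exists M, forall x, `|phi x| <= M) ->
  supnorm phi \is a fin_num.
Proof.
move=> [M hM]; rewrite ge0_fin_numE; last exact: le_trans (normr_le_supnorm _ x0).
by apply: le_lt_trans (ltry M); apply: ge_ereal_sup => _ [x _ <-]; rewrite lee_fin.
Qed.

End supnorm.

Lemma le_ratio_mapp {d : measure_display} {X : measurableType d} {R : realType}
    (P : {measure set X -> \bar R}) (q : X -> R) (C : \bar R) x :
  P setT = 1%E -> bounded_measurable q -> (forall y, 0 < q y) ->
  (forall y, ((q x / q y)%:E <= C)%E) -> ((q x / mapp P q)%:E <= C)%E.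
Proof.
move=> PT bq q0 qC; have P_fin : (P setT < +oo)%E by rewrite PT ltry.
have Pq0 : 0 < mapp P q by apply: mapp_gt0 => //; rewrite PT oner_neq0.
case: C qC => [r | | ] qC; last 2 first.
- exact: leey.
- by have := qC x; rewrite leeNy_eq.
rewrite lee_fin ler_pdivrMr //.
have -> : q x = mapp P (fun=> q x) by rewrite mapp_cst PT mulr1.
rewrite -mappZ //; apply: le_mapp => //; [exact: bounded_measurable_cst |
  exact: bounded_measurableZ | move=> y].
by have := qC y; rewrite lee_fin ler_pdivrMr.
Qed.

Lemma ler_prod_1sub_sqr (R : realDomainType) (I : Type) (r : seq I) (P : pred I)
    (e : I -> R) :
  (forall i, P i -> 0 <= e i <= 1) ->
  \prod_(i <- r | P i) (1 - e i) <= \prod_(i <- r | P i) (1 - e i ^+ 2).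
Proof.
move=> e01; apply: ler_prod => i /e01 /andP[e0 e1].
by rewrite subr_ge0 e1 lerD2l lerN2 expr2 ler_piMr.
Qed.

Lemma shrink_envelope (R : realFieldType) (m D e a b G H : R) :
  a + b = D -> e * a * H <= G - m * H -> e * b * H <= (m + D) * H - G ->
  (m + e * a) * H <= G /\ G <= (m + e * a + (1 - e) * D) * H.
Proof. by move=> <- hu hv; split; lra. Qed.

Lemma norm_centered_ratio_le (R : realFieldType) (m D P q E Z : R) :
  0 < q -> 0 < Z ->
  m * q <= P /\ P <= (m + D) * q -> m * Z <= E /\ E <= (m + D) * Z ->
  `|P / Z - q / Z * (E / Z)| <= q / Z * D.
Proof.
move=> q0 Z0 [Pm PM] [Em EM].
have -> : P / Z - q / Z * (E / Z) = q / Z * (P / q - E / Z) by field; rewrite !gt_eqF.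
have qZ0 : 0 <= q / Z by rewrite divr_ge0 ?ltW.
rewrite normrM ger0_norm //; apply: ler_wpM2l => //.
have : m <= P / q <= m + D by rewrite ler_pdivlMr ?ler_pdivrMr ?Pm.
have : m <= E / Z <= m + D by rewrite ler_pdivlMr ?ler_pdivrMr ?Em.
by move=> /andP[? ?] /andP[? ?]; rewrite ler_norml; apply/andP; split; lra.
Qed.

Section minorization_ratio.
Context {X : Type} {R : realType}.
Variables (sm sp : X -> R).
Hypotheses (sm_gt0 : forall x, 0 < sm x) (sp_gt0 : forall x, 0 < sp x).

Definition eps := inf [set sm x / sp x | x in setT].

Let ratio_lbound : has_lbound [set sm x / sp x | x in setT].
Proof. by exists 0 => _ [x _ <-]; rewrite divr_ge0 // ltW. Qed.

Lemma eps_ge0 (x0 : X) : 0 <= eps.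
Proof.
apply: lb_le_inf; first by exists (sm x0 / sp x0), x0.
by move=> _ [x _ <-]; rewrite divr_ge0 // ltW.
Qed.

Lemma eps_mulr_le x : eps * sp x <= sm x.
Proof. by rewrite -ler_pdivlMr //; apply: ge_inf ratio_lbound _ _; exists x. Qed.

Lemma eps_le1 (x0 : X) : sm x0 <= sp x0 -> eps <= 1.
Proof. by move=> smp; rewrite -(ler_pM2r (sp_gt0 x0)) mul1r (le_trans (eps_mulr_le x0)). Qed.

End minorization_ratio.

Section sandwiched_kernel.
Context {d : measure_display} {X : measurableType d} {R : realType}.

Definition kernel_sandwich (k : R.-ker X ~> X) (nu : {measure set X -> \bar R})
    (sm sp : X -> R) :=
  forall x A, measurable A ->
    ((sm x)%:E * nu A <= k x A /\ k x A <= (sp x)%:E * nu A)%E.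

Variables (k : R.-ker X ~> X) (nu : {finite_measure set X -> \bar R}) (sm sp : X -> R).
Hypothesis hk : kernel_sandwich k nu sm sp.
Implicit Types (f g : X -> R) (c : R).

Let nu_fin : (nu setT < +oo)%E.
Proof. by apply: fin_num_fun_lty; exact: fin_num_measure. Qed.

Lemma kernel_sandwich_fin x : (k x setT < +oo)%E.
Proof.
apply: le_lt_trans (hk x measurableT).2 _.
by rewrite ltey_eq fin_numM ?fin_num_measure.
Qed.

Lemma KopE f x : Kop k f x = mapp (k x) f.
Proof. by []. Qed.

Lemma KopB f g x : bounded_measurable f -> bounded_measurable g ->
  Kop k (fun y => f y - g y) x = Kop k f x - Kop k g x.
Proof. by move=> bf bg; rewrite !KopE mappB //; exact: kernel_sandwich_fin. Qed.

Lemma KopZ c f x : bounded_measurable f -> Kop k (fun y => c * f y) x = c * Kop k f x.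
Proof. by move=> bf; rewrite !KopE mappZ //; exact: kernel_sandwich_fin. Qed.

Lemma Kop_ge f x : 0 <= sm x -> bounded_measurable f -> (forall y, 0 <= f y) ->
  sm x * mapp nu f <= Kop k f x.
Proof.
move=> sm0 bf f0; rewrite -[Kop k f x]mul1r.
apply: le_mapp_mscale => // [|A mA]; first exact: kernel_sandwich_fin.
by rewrite mul1e; exact: (hk x mA).1.
Qed.

Lemma Kop_le f x : 0 <= sp x -> bounded_measurable f -> (forall y, 0 <= f y) ->
  Kop k f x <= sp x * mapp nu f.
Proof.
move=> sp0 bf f0; rewrite -[Kop k f x]mul1r.
apply: le_mapp_mscale => // [|A mA]; first exact: kernel_sandwich_fin.
by rewrite mul1e; exact: (hk x mA).2.
Qed.

Lemma measurable_Kop_ge0 f : measurable_fun setT f -> (forall y, 0 <= f y) ->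
  measurable_fun setT (Kop k f).
Proof.
move=> mf f0; apply: measurableT_comp; first exact: fine_measurable.
apply: measurable_fun_integral_kernel; first exact: measurable_kernel.
  by move=> y; rewrite lee_fin.
exact/measurable_EFinP.
Qed.

Lemma measurable_Kop f : bounded_measurable f -> measurable_fun setT (Kop k f).
Proof.
move=> bf; have [mf [M hM]] := bf.
have bfM := bounded_measurableB bf (bounded_measurable_cst (- M)).
have -> : Kop k f = fun x => Kop k (fun y => f y - - M) x - Kop k (fun=> M) x.
  apply/funext => x; rewrite -KopB //; last exact: bounded_measurable_cst.
  by congr (Kop k _ x); apply/funext => y; rewrite opprK addrK.
apply: measurable_funB.
  apply: measurable_Kop_ge0; first by case: bfM.
  by move=> y; move: (hM y); rewrite subr_ge0 ler_norml => /andP[].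
have -> : Kop k (fun=> M) = fun x => M * fine (k x setT).
  by apply/funext => x; rewrite KopE mapp_cst.
apply: measurable_funM; first exact: measurable_cst.
by apply: measurableT_comp; [exact: fine_measurable | exact: measurable_kernel].
Qed.

Lemma bounded_measurable_Kop f : (forall x, 0 <= sp x) ->
  (exists M, forall x, sp x <= M) -> bounded_measurable f ->
  bounded_measurable (Kop k f).
Proof.
move=> sp0 [Mp hMp] bf; split; first exact: measurable_Kop.
have [_ [M hM]] := bf.
exists (M * (Mp * fine (nu setT))) => x.
have M0 : 0 <= M := le_trans (normr_ge0 _) (hM x).
have nu0 : 0 <= fine (nu setT) by rewrite fine_ge0.
have kT : fine (k x setT) <= sp x * fine (nu setT).
  have := Kop_le (sp0 x) (bounded_measurable_cst 1) (fun=> ler01).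
  by rewrite KopE !mapp_cst !mul1r.
rewrite KopE (le_trans (norm_mapp_le (kernel_sandwich_fin x) bf hM)) //.
by rewrite ler_wpM2l // (le_trans kT) // ler_wpM2r.
Qed.

Lemma sm_le_sp x : nu setT != 0%E -> sm x <= sp x.
Proof.
move=> nu0; have [lo hi] := hk x measurableT.
by move: (le_trans lo hi); rewrite lee_pmul2r ?fin_num_measure ?lt0e ?nu0 ?measure_ge0.
Qed.


Lemma Kop_oscillation_step g h m D :
  (forall x, 0 < sm x) -> (forall x, 0 < sp x) -> nu setT != 0%E ->
  bounded_measurable g -> bounded_measurable h -> (forall y, 0 < h y) ->
  (forall y, m * h y <= g y /\ g y <= (m + D) * h y) ->
  exists m', forall y, m' * Kop k h y <= Kop k g y /\
    Kop k g y <= (m' + (1 - eps sm sp) * D) * Kop k h y.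
Proof.
move=> sm0 sp0 nu0 bg bh h0 hgh; have e0 := eps_ge0 sm0 sp0.
set N := mapp nu h; have N0 : 0 < N := mapp_gt0 nu_fin nu0 bh h0.
(* The minorization lets a nonnegative gap u absorb eps * nu(u) / nu(h) copies of K h;
   applied to both gaps of the envelope, this shrinks its width by 1 - eps. *)
have gain u y : bounded_measurable u -> (forall z, 0 <= u z) ->
    eps sm sp * (mapp nu u / N) * Kop k h y <= Kop k u y.
  move=> bu u0; have a0 : 0 <= mapp nu u by apply: Rintegral_ge0.
  have Kh : Kop k h y <= sp y * N by apply: Kop_le => // [|z]; rewrite ltW.
  apply: le_trans (Kop_ge (ltW (sm0 y)) bu u0).
  apply: le_trans (_ : eps sm sp * (mapp nu u / N) * (sp y * N) <= _).
    by apply: ler_wpM2l => //; apply: mulr_ge0; [exact: e0 y | exact: divr_ge0 a0 (ltW N0)].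
  have -> : eps sm sp * (mapp nu u / N) * (sp y * N) = eps sm sp * sp y * mapp nu u.
    by field; rewrite gt_eqF.
  by apply: ler_wpM2r => //; exact: eps_mulr_le sm0 sp0 y.
pose u y := g y - m * h y; pose v y := (m + D) * h y - g y.
have bu : bounded_measurable u.
  by apply: bounded_measurableB => //; exact: bounded_measurableZ.
have bv : bounded_measurable v.
  by apply: bounded_measurableB => //; exact: bounded_measurableZ.
have uv : mapp nu u + mapp nu v = D * N.
  by rewrite !mappB ?mappZ //; [rewrite /N; ring | exact: bounded_measurableZ ..].
exists (m + eps sm sp * (mapp nu u / N)) => y.
have Ku : Kop k u y = Kop k g y - m * Kop k h y.
  by rewrite KopB ?KopZ //; exact: bounded_measurableZ.
have Kv : Kop k v y = (m + D) * Kop k h y - Kop k g y.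
  by rewrite KopB ?KopZ //; exact: bounded_measurableZ.
apply: (@shrink_envelope _ _ _ _ _ (mapp nu v / N)).
- by rewrite -mulrDl uv mulfK ?gt_eqF.
- by rewrite -Ku; apply: gain => // z; rewrite subr_ge0; case: (hgh z).
- by rewrite -Kv; apply: gain => // z; rewrite subr_ge0; case: (hgh z).
Qed.
End sandwiched_kernel.

Section kernel_product.
Context {d : measure_display} {X : measurableType d} {R : realType}.
Variables (K : nat -> R.-ker X ~> X) (nu : nat -> {finite_measure set X -> \bar R})
  (Sm Sp : nat -> X -> R).
Hypotheses (nu_neq0 : forall p, (0 < p)%N -> nu p setT != 0%E)
  (Sm_gt0 : forall p, (0 < p)%N -> forall x, 0 < Sm p x)
  (Sp_gt0 : forall p, (0 < p)%N -> forall x, 0 < Sp p x)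
  (Sp_bounded : forall p, (0 < p)%N -> exists M : R, forall x, Sp p x <= M)
  (K_sandwich : forall p, (0 < p)%N -> kernel_sandwich (K p) (nu p) (Sm p) (Sp p)).
Implicit Types (f : X -> R) (p k : nat).

Definition Kcomp_from p k f := foldr (fun q g => Kop (K q) g) f (iota p k).

Lemma Kcomp_fromS p k f : Kcomp_from p k.+1 f = Kop (K p) (Kcomp_from p.+1 k f).
Proof. by []. Qed.

Lemma bounded_measurable_Kcomp_from p k f : (0 < p)%N ->
  bounded_measurable f -> bounded_measurable (Kcomp_from p k f).
Proof.
elim: k p => [|k IH] p p0 bf //; rewrite Kcomp_fromS.
apply: (bounded_measurable_Kop (K_sandwich p0)); last exact: IH.
- by move=> x; exact: ltW (Sp_gt0 p0 x).
- exact: Sp_bounded.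
Qed.

Lemma Kcomp_from_gt0 p k y : (0 < p)%N -> 0 < Kcomp_from p k (fun=> 1) y.
Proof.
elim: k p y => [|k IH] p y p0; first exact: ltr01.
have bh := bounded_measurable_Kcomp_from k (ltn0Sn p) (bounded_measurable_cst 1).
rewrite Kcomp_fromS; apply: lt_le_trans (Kop_ge (K_sandwich p0) _ bh _).
- rewrite mulr_gt0 ?Sm_gt0 //; apply: mapp_gt0 => //.
  + by apply: fin_num_fun_lty; exact: fin_num_measure.
  + exact: nu_neq0.
  + by move=> z; exact: IH.
- exact: ltW (Sm_gt0 p0 y).
- by move=> z; exact: ltW (IH _ _ _).
Qed.

Lemma Kcomp_from_oscillation phi (c : R) : bounded_measurable phi ->
  (forall y, `|phi y| <= c) -> forall k p, (0 < p)%N -> exists m, forall y,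
    m * Kcomp_from p k (fun=> 1) y <= Kcomp_from p k phi y /\
    Kcomp_from p k phi y <= (m + 2 * c * \prod_(p <= i < p + k) (1 - eps (Sm i) (Sp i)))
      * Kcomp_from p k (fun=> 1) y.
Proof.
move=> bphi hc; elim=> [|k IH] p p0.
  exists (- c) => y; rewrite addn0 big_geq // mulr1 /Kcomp_from /=.
  by move: (hc y); rewrite ler_norml => /andP[? ?]; split; lra.
have [m hm] := IH p.+1 isT.
have [m' hm'] := Kop_oscillation_step (K_sandwich p0) (Sm_gt0 p0) (Sp_gt0 p0) (nu_neq0 p0)
  (bounded_measurable_Kcomp_from k (ltn0Sn p) bphi)
  (bounded_measurable_Kcomp_from k (ltn0Sn p) (bounded_measurable_cst 1))
  (fun y => Kcomp_from_gt0 k y (ltn0Sn p)) hm.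
exists m' => y; rewrite !Kcomp_fromS -addSnnS big_ltn ?ltn_addr // [2 * c * _]mulrCA.
exact: hm'.
Qed.

Lemma KcompE n f : Kcomp K n f = Kcomp_from 1 n f.
Proof. by []. Qed.

Lemma Kcomp_from_ratio_le p k x x' : (0 < p)%N ->
  Kcomp_from p k.+1 (fun=> 1) x / Kcomp_from p k.+1 (fun=> 1) x' <= Sp p x / Sm p x'.
Proof.
move=> p0; have q0 := Kcomp_from_gt0 k.+1 x' p0; rewrite ler_pdivrMr //.
move: q0; rewrite !Kcomp_fromS => q0.
have bh := bounded_measurable_Kcomp_from k (ltn0Sn p) (bounded_measurable_cst 1).
have h0 y : 0 <= Kcomp_from p.+1 k (fun=> 1) y by exact: ltW (Kcomp_from_gt0 _ _ _).
apply: le_trans (Kop_le (K_sandwich p0) (ltW (Sp_gt0 p0 x)) bh h0) _.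
rewrite -mulrA ler_wpM2l ?(ltW (Sp_gt0 p0 x)) // ler_pdivlMl ?Sm_gt0 //.
by apply: (Kop_ge (K_sandwich p0)) => //; exact: ltW (Sm_gt0 p0 x').
Qed.

Lemma Kcomp_ratio_le n x x' : (0 < n)%N ->
  Kcomp K n (fun=> 1) x / Kcomp K n (fun=> 1) x' <= Sp 1%N x / Sm 1%N x'.
Proof. by case: n => // n _; rewrite !KcompE; exact: Kcomp_from_ratio_le. Qed.

Lemma Kcomp_centered_le (eta : {measure set X -> \bar R}) phi (c : R) n x :
  eta setT = 1%E -> bounded_measurable phi -> (forall y, `|phi y| <= c) ->
  let Z := mapp eta (Kcomp K n (fun=> 1)) in
  `|Kcomp K n phi x / Z - Kcomp K n (fun=> 1) x / Z * (mapp eta (Kcomp K n phi) / Z)|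
    <= Kcomp K n (fun=> 1) x / Z * (2 * c * \prod_(1 <= i < n.+1) (1 - eps (Sm i) (Sp i))).
Proof.
move=> eta1 bphi hc; cbv zeta; have eta_fin : (eta setT < +oo)%E by rewrite eta1 ltry.
have [m hm] := Kcomp_from_oscillation bphi hc n (ltnSn 0); rewrite add1n in hm.
rewrite !KcompE; set D := 2 * c * _ in hm *.
have bq := bounded_measurable_Kcomp_from n (ltnSn 0) (bounded_measurable_cst 1).
have bQ := bounded_measurable_Kcomp_from n (ltnSn 0) bphi.
have q0 y := Kcomp_from_gt0 n y (ltnSn 0).
apply: (@norm_centered_ratio_le _ m) => //.
  by apply: mapp_gt0 => //; rewrite eta1 oner_neq0.
rewrite -!mappZ //; split; apply: le_mapp => //; try exact: bounded_measurableZ.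
  by move=> y; case: (hm y).
by move=> y; case: (hm y).
Qed.

Lemma eps_itv p (x0 : X) : (0 < p)%N -> 0 <= eps (Sm p) (Sp p) <= 1.
Proof.
move=> p0; rewrite (eps_ge0 (Sm_gt0 p0) (Sp_gt0 p0) x0).
apply: (eps_le1 (Sm_gt0 p0) (Sp_gt0 p0) (x0 := x0)).
exact: sm_le_sp (K_sandwich p0) x0 (nu_neq0 p0).
Qed.

Lemma Kcomp_centered_bound (eta : {measure set X -> \bar R}) phi (c : R) (C : \bar R) n x :
  eta setT = 1%E -> bounded_measurable phi -> (forall y, `|phi y| <= c) ->
  (forall y, ((Kcomp K n (fun=> 1) x / Kcomp K n (fun=> 1) y)%:E <= C)%E) ->
  let Z := mapp eta (Kcomp K n (fun=> 1)) in
  ((`|Kcomp K n phi x / Z - Kcomp K n (fun=> 1) x / Z * (mapp eta (Kcomp K n phi) / Z)|)%:E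
    <= 2%:E * c%:E * C * (\prod_(1 <= i < n.+1) rho (Sp i) (Sm i))%:E)%E.
Proof.
move=> eta1 bphi hc qC; have := Kcomp_centered_le n x eta1 bphi hc; cbv zeta.
set q := Kcomp K n (fun=> 1); set E := \prod_(_ <= i < _) (1 - _) => centered.
have bq := bounded_measurable_Kcomp_from n (ltnSn 0) (bounded_measurable_cst 1).
have q0 y := Kcomp_from_gt0 n y (ltnSn 0).
have qZ := le_ratio_mapp eta1 bq q0 qC.
have C0 : (0 <= C)%E.
  apply: le_trans qZ; rewrite lee_fin divr_ge0 ?ltW //.
  by apply: mapp_gt0 => //; rewrite eta1 ?ltry ?oner_neq0.
have c0 : 0 <= 2 * c by rewrite mulr_ge0 // (le_trans _ (hc x)).
have E0 : 0 <= E.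
  rewrite /E big_nat_cond; apply: prodr_ge0 => i /andP[/andP[i0 _] _].
  by rewrite subr_ge0; case/andP: (eps_itv x i0).
have EP : E <= \prod_(1 <= i < n.+1) rho (Sp i) (Sm i).
  rewrite /E big_nat_cond [leRHS]big_nat_cond.
  by apply: ler_prod_1sub_sqr => i /andP[/andP[i0 _] _]; exact: eps_itv x i0.
apply: le_trans (_ : (q x / mapp eta q)%:E * (2 * c * E)%:E <= _)%E.
  by rewrite -EFinM lee_fin.
apply: le_trans (lee_wpmul2r _ qZ) _; first by rewrite lee_fin mulr_ge0.
rewrite muleAC -!EFinM [leRHS]muleC; apply: lee_wpmul2l => //.
by rewrite lee_fin ler_wpM2l.
Qed.

End kernel_product.

Theorem proposition3 (d : measure_display) (X : measurableType d) (R : realType)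
  (K : nat -> R.-ker X ~> X)
  (nu : nat -> {finite_measure set X -> \bar R})
  (Sm Sp : nat -> X -> R)
  (hnu : forall n, (0 < n)%N -> nu n setT != 0%E)
  (hSm_meas : forall n, (0 < n)%N -> measurable_fun setT (Sm n))
  (hSp_meas : forall n, (0 < n)%N -> measurable_fun setT (Sp n))
  (hSm_pos : forall n, (0 < n)%N -> forall x, 0 < Sm n x)
  (hSp_pos : forall n, (0 < n)%N -> forall x, 0 < Sp n x)
  (hSm_bd : forall n, (0 < n)%N -> exists M : R, forall x, Sm n x <= M)
  (hSp_bd : forall n, (0 < n)%N -> exists M : R, forall x, Sp n x <= M)
  (hK : forall n, (0 < n)%N -> forall x A, measurable A ->
     ((Sm n x)%:E * nu n A <= K n x A /\ K n x A <= (Sp n x)%:E * nu n A)%E) :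
  let CS : \bar R := ereal_sup [set Sbar (Sp n) (Sm n) | n in [set n | (0 < n)%N]] in
  (ereal_sup [set r | exists n (x x' : X), (0 < n)%N /\
       r = ((Kcomp K n (fun=> 1) x) / (Kcomp K n (fun=> 1) x'))%:E]
     <= CS)%E
  /\
  (forall (eta : probability X R) (phi : X -> R),
     measurable_fun setT phi ->
     (exists M : R, forall x, `|phi x| <= M) ->
     forall n, (0 < n)%N ->
     let Z := mapp eta (Kcomp K n (fun=> 1)) in
     (ereal_sup (range (fun x =>
         (`| Kcomp K n phi x / Z
             - (Kcomp K n (fun=> 1) x / Z) * (mapp eta (Kcomp K n phi) / Z) |)%:E))
      <= 2%:E * supnorm phi * CS * (\prod_(1 <= p < n.+1) rho (Sp p) (Sm p))%:E)%E).
Proof.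
(* [hK] restated through [kernel_sandwich], so that it determines [nu], [Sm] and [Sp]
   in the lemmas it is passed to. *)
have sandwich p : (0 < p)%N -> kernel_sandwich (K p) (nu p) (Sm p) (Sp p) := hK p.
move=> CS; have ratio_le n x x' : (0 < n)%N ->
    ((Kcomp K n (fun=> 1) x / Kcomp K n (fun=> 1) x')%:E <= CS)%E.
  move=> n0; apply: (@le_trans _ _ (Sbar (Sp 1%N) (Sm 1%N))).
    apply: (@le_trans _ _ (Sp 1%N x / Sm 1%N x')%:E).
      by rewrite lee_fin; exact: (Kcomp_ratio_le hnu hSm_pos hSp_pos hSp_bd sandwich).
    by apply: ereal_sup_ubound; exists x => //; exists x'.
  by apply: ereal_sup_ubound; exists 1%N.
split; first by apply: ge_ereal_sup => _ [n [x [x' [n0 ->]]]]; exact: ratio_le.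
move=> eta phi mphi phi_bd n n0; cbv zeta; apply: ge_ereal_sup => _ [x _ <-].
have eta1 : (eta : {measure set X -> \bar R}) setT = 1%E by exact: probability_setT.
have cE : supnorm phi = (fine (supnorm phi))%:E by rewrite fineK // (supnorm_fin_num x).
have hc y : `|phi y| <= fine (supnorm phi) by rewrite -lee_fin -cE normr_le_supnorm.
rewrite cE; exact (Kcomp_centered_bound hnu hSm_pos hSp_pos hSp_bd sandwich
  eta1 (conj mphi phi_bd) hc (fun y => ratio_le n x y n0)).
Qed.
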